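(* Let $\mathsf A$ be the Manacher array of some string of length $n$, and let $\mathsf F$ be the corresponding palindromic fingerprint. Let $G=G(\mathsf F)$ be its restriction graph. Then: (i) For every proper vertex coloring $\psi:V(G)\to\Sigma$ that uses exactly $k$ colors, the string $T=\psi'(1)\psi'(2)\cdots\psi'(n)$, where $\psi'(i)=\psi(C)$ for the unique vertex $C$ with $i\in C$, has Manacher array $\mathsf A$ and exactly $k$ distinct symbols. (ii) Conversely, for every string $T$ of length $n$ with Manacher array $\mathsf A$, the map $\psi(C):=T[i]$ for any $i\in C$ is well defined and is a proper vertex coloring of $G$, and these two constructions are mutually inverse. In particular, the minimum number of distinct symbols in a string with Manacher array $\mathsf A$ equals $\chi(G)$.
   Context: A substring $S[i..j]$ (including the empty substring $S[i..i-1]$) is a maximal palindrome of $S$ if it is a palindrome and $S[i-1..j+1]$ is either undefined (i.e. $i=1$ or $j=|S|$) or not a palindrome. The palindromic fingerprint $\mathsf F$ of a string $S$ of length $n$ is the set of pairs $(i,j)$ such that $S[i..j]$ is a maximal palindrome (with $(i,i-1)$ for empty ones); $|\mathsf F|:=n$. The fingerprint and the Manacher array determine each other. A string $T$ is a reconstruction of $\mathsf F$ if $|T|=n$ and the fingerprint of $T$ is $\mathsf F$. Equality graph $G_=(\mathsf F)$: vertex set $\{1,\dots,n\}$, with $i,j$ ($i<j$) adjacent iff there is $(a,b)\in\mathsf F$ with $a\le i<j\le b$ and $i+j=a+b$ (so $T[i]=T[j]$ in every reconstruction). Restriction graph $G(\mathsf F)$: its vertices are the connected components $C_1,\dots,C_\ell$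 of $G_=(\mathsf F)$ (these partition $\{1,\dots,n\}$), and $C,C'$ are adjacent iff there exist $i\in C$, $j\in C'$ with $1\le i<j\le n$ and $(i+1,j-1)\in\mathsf F$. A proper coloring assigns colors to vertices so that adjacent vertices get different colors; $\chi(G)$ is the chromatic number. The Manacher array of $S$ of length $n$: $\mathsf A[2k-1]$ is the largest $r\ge0$ with $S[k-r..k+r]$ a palindrome inside $S$, and $\mathsf A[2k]$ the largest $r\ge0$ with $S[k-r+1..k+r]$ a palindrome inside $S$. *)

(* Strings of length n over an alphabet (eqType) Sigma are
   modelled as functions S : nat -> Sigma, of which only the positions
   1..n matter (S i is the paper's S[i]). *)
From mathcomp Require Import all_boot.
Set Implicit Arguments. Unset Strict Implicit. Unset Printing Implicit Defensive.

Section Strings.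
Variable Sigma : eqType.

Definition pal (S : nat -> Sigma) (i j : nat) : bool :=
  all (fun t => S t == S (i + j - t)) (iota i (j.+1 - i)).

Definition inside (n i j : nat) : bool := [&& 1 <= i, i <= j.+1 & j <= n].

(* r is admissible at Manacher index m:
   m = 2k-1 : S[k-r..k+r] is a palindrome inside S
   m = 2k   : S[k-r+1..k+r] is a palindrome inside S *)
Definition manacher_ok (n : nat) (S : nat -> Sigma) (m r : nat) : bool :=
  if odd m then
    let k := m.+1./2 in [&& r < k, k + r <= n & pal S (k - r) (k + r)]
  else
    let k := m./2 in [&& r <= k, k + r <= n & pal S (k.+1 - r) (k + r)].

(* Manacher array A[m], meaningful for 1 <= m <= 2n. *)
Definition manacher (n : nat) (S : nat -> Sigma) (m : nat) : nat :=
  \max_(r < n.+1 | manacher_ok n S m r) r.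

Definition has_manacher (n : nat) (T : nat -> Sigma) (A : nat -> nat) : Prop :=
  forall m, 0 < m <= n.*2 -> manacher n T m = A m.

(* Palindromic fingerprint: (i,j) in F iff S[i..j] is a maximal palindrome
   (including the empty ones (i,i-1)). *)
Definition fingerprint (n : nat) (S : nat -> Sigma) (i j : nat) : bool :=
  [&& inside n i j, pal S i j & [|| i == 1, j == n | ~~ pal S i.-1 j.+1]].

Definition nsym (n : nat) (T : nat -> Sigma) : nat :=
  size (undup [seq T i | i <- iota 1 n]).

End Strings.

Section Graphs.
Variables (n : nat) (F : rel nat).

Definition eq_edge (i j : nat) : bool :=
  (i < j) && has (fun a => F a (i + j - a)) (iota 0 i.+1).

(* Vertices of G_= : the ordinal u : 'I_n stands for position u+1. *)
Definition geq_rel : rel 'I_n :=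
  fun u v => eq_edge u.+1 v.+1 || eq_edge v.+1 u.+1.

Definition comp (u : 'I_n) : {set 'I_n} := [set v | connect geq_rel u v].

Definition comps : {set {set 'I_n}} := [set comp u | u : 'I_n].

(* adjacency in G(F): exist i \in C, j \in C', 1 <= i < j <= n,
   (i+1, j-1) \in F  (positions i = u+1, j = v+1). *)
Definition rg_adj (C C' : {set 'I_n}) : bool :=
  [exists u in C, exists v in C', (u < v) && F u.+2 v].

Definition proper_coloring (Sigma : Type) (psi : {set 'I_n} -> Sigma) : Prop :=
  forall C C', C \in comps -> C' \in comps -> rg_adj C C' -> psi C <> psi C'.

Definition ncolors (Sigma : eqType) (psi : {set 'I_n} -> Sigma) : nat :=
  size (undup [seq psi C | C <- enum comps]).

Definition string_of_coloring (Sigma : Type) (psi : {set 'I_n} -> Sigma)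
    (i : nat) : Sigma :=
  match @insub nat (fun k => k < n) 'I_n i.-1 with
  | Some u => psi (comp u)
  | None => psi set0
  end.

Definition coloring_of_string (Sigma : Type) (T : nat -> Sigma)
    (C : {set 'I_n}) : Sigma :=
  match [pick u in C] with
  | Some u => T u.+1
  | None => T 0
  end.

Definition is_chromatic_number (k : nat) : Prop :=
  (exists psi : {set 'I_n} -> nat,
      proper_coloring psi /\ forall C, C \in comps -> psi C < k) /\
  (forall (k' : nat) (psi : {set 'I_n} -> nat),
      proper_coloring psi -> (forall C, C \in comps -> psi C < k') -> k <= k').

End Graphs.

Definition is_min_symbols (n : nat) (A : nat -> nat) (k : nat) : Prop :=
  (exists T : nat -> nat, has_manacher n T A /\ nsym n T = k) /\
  (forall (Sigma : eqType) (T : nat -> Sigma), has_manacher n T A -> k <= nsym n T).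

From Pilot Require Import Defs.
From mathcomp Require Import all_boot zify.
Set Implicit Arguments. Unset Strict Implicit. Unset Printing Implicit Defensive.

(* Two strings have the same Manacher array iff they have the same palindromic
   substrings, and, given the fingerprint F of S, a string T has the same
   palindromic substrings as S iff every maximal palindrome (a, b) of F is a
   palindrome of T and, when it is not a prefix or suffix, T[a-1] <> T[b+1].
   The first condition says exactly that T is constant on the components of
   G_=, the second that the induced colouring of G(F) is proper.  Hence
   strings with Manacher array A and proper colourings of G(F) correspond
   bijectively, with the same number of symbols and colours. *)

Section Palindromes.
Variable X : eqType.
Implicit Types T : nat -> X.

Lemma palP T a b :
  reflect (forall t, a <= t <= b -> T t = T (a + b - t)) (pal T a b).
Proof.
apply: (iffP allP) => H t Ht; apply/eqP/H; move: Ht; rewrite ?mem_iota; lia.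
Qed.

Lemma pal_nested T a b a' b' :
  pal T a b -> a <= a' -> a' + b' = a + b -> pal T a' b'.
Proof. by move=> /palP H ha hs; apply/palP => t Ht; rewrite hs; apply: H; lia. Qed.

Lemma pal_extend T a b :
  0 < a <= b.+1 -> pal T a b -> T a.-1 = T b.+1 -> pal T a.-1 b.+1.
Proof.
move=> hab /palP H He; apply/palP => t Ht.
have [->|ne1] := eqVneq t a.-1; first by rewrite He; congr T; lia.
have [->|ne2] := eqVneq t b.+1; first by rewrite -He; congr T; lia.
by rewrite H; [congr T|]; lia.
Qed.

Lemma pal_ends T a b : pal T a b -> a <= b -> T a = T b.
Proof. by move=> /palP H hab; rewrite H; [congr T|]; lia. Qed.

Lemma pal_short T a b : b <= a -> pal T a b.
Proof. by move=> hab; apply/palP => t Ht; congr T; lia. Qed.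

End Palindromes.

Section ManacherArray.
Variables (X : eqType) (n : nat).
Implicit Types T : nat -> X.

Lemma manacher_ok_le T m r r' :
  manacher_ok n T m r -> r' <= r -> manacher_ok n T m r'.
Proof.
by rewrite /manacher_ok; case: ifP => _ /and3P [h1 h2 h3] hr;
  apply/and3P; split; try lia; apply: pal_nested h3 _ _; lia.
Qed.

Lemma manacher_ok_lt T m r : manacher_ok n T m r -> r < n.+1.
Proof. by rewrite /manacher_ok; case: ifP => _ /and3P [? ? ?]; lia. Qed.

Lemma manacher_ok0 T m : 0 < m <= n.*2 -> manacher_ok n T m 0.
Proof.
by move=> hm; rewrite /manacher_ok; case: ifP => _;
  apply/and3P; split; try lia; apply: pal_short; lia.
Qed.

Lemma manacher_okE T m r :
  0 < m <= n.*2 -> manacher_ok n T m r = (r <= manacher n T m).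
Proof.
move=> hm; apply/idP/idP => [hr | ].
  pose i : 'I_n.+1 := Ordinal (manacher_ok_lt hr).
  exact: (@leq_bigmax_cond _ (fun i : 'I_n.+1 => manacher_ok n T m i) val i).
have h0 : manacher_ok n T m (ord0 : 'I_n.+1) by exact: manacher_ok0.
rewrite /manacher (bigmax_eq_arg _ h0).
by case: arg_maxnP => //= i hi _; apply: manacher_ok_le.
Qed.

Lemma manacher_ok_pal a b : inside n a b -> 1 < a + b ->
  exists r, forall (Y : eqType) (T : nat -> Y),
    manacher_ok n T (a + b).-1 r = pal T a b.
Proof.
move=> /and3P [ha hab hb] hs; exists (b - (a + b)./2) => Y T.
have := odd_double_half (a + b); rewrite /manacher_ok -addnn.
set q := (a + b)./2.
case: (boolP (odd (a + b))) => hodd /= hq.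
- have hm : (a + b).-1 = q.*2 by rewrite -addnn; lia.
  rewrite hm odd_double doubleK /=.
  have -> : q.+1 - (b - q) = a by lia.
  have -> : q + (b - q) = b by lia.
  by rewrite hb (_ : b - q <= q) //; lia.
- have hm : (a + b).-1 = (q.-1.*2).+1 by rewrite -addnn; lia.
  rewrite hm /= odd_double /= doubleK (_ : q.-1.+1 = q); last lia.
  have -> : q - (b - q) = a by lia.
  have -> : q + (b - q) = b by lia.
  by rewrite hb (_ : b - q < q) //; lia.
Qed.

End ManacherArray.

Lemma has_manacherP (X Y : eqType) (n : nat) (S : nat -> Y) (T : nat -> X) :
  has_manacher n T (manacher n S) <->
  (forall a b, inside n a b -> pal T a b = pal S a b).
Proof.
split=> [HT a b hin | H m _].
  have [hs|hs] := leqP (a + b) 1.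
    by rewrite !pal_short //; case/and3P: hin => ? ? ?; lia.
  have [r hr] := manacher_ok_pal hin hs.
  have hm : 0 < (a + b).-1 <= n.*2 by case/and3P: hin => ? ? ?; rewrite -addnn; lia.
  by rewrite -!hr !manacher_okE // HT.
rewrite /manacher; apply: eq_bigl => r; rewrite /manacher_ok.
by case: ifP => _; case: leqP => //= h1; case: leqP => //= h2;
  apply: H; rewrite /inside; lia.
Qed.

Section Fingerprint.
Variables (X : eqType) (n : nat) (S : nat -> X).
Local Notation F := (fingerprint n S).

Lemma pal_in_fingerprint a b : inside n a b -> pal S a b ->
  exists2 a', a' <= a & F a' (a + b - a').
Proof.
elim: a b => [|a IH] b hin hp; first by case/and3P: hin.
case: (boolP [|| a == 0, b == n | ~~ pal S a b.+1]) => hmax.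
  by exists a.+1; rewrite // /fingerprint addKn hin hp.
move: hmax; rewrite !negb_or negbK => /and3P [ha hb hq].
have hin' : inside n a b.+1 by move: hin ha hb; rewrite /inside; lia.
have [a' h1 h2] := IH _ hin' hq; exists a'; first lia.
by rewrite (_ : a.+1 + b - a' = a + b.+1 - a'); [|lia].
Qed.

Lemma fingerprint_in_nonpal a b : inside n a b -> ~~ pal S a b ->
  exists a', [/\ a < a', a' + a' <= (a + b).+1 & F a' (a + b - a')].
Proof.
move=> hin hp; case/and3P: (hin) => ha hab hb.
have [c [hac hc hpc]] :
    exists c, [/\ a <= c, c + c <= (a + b).+1 & pal S c (a + b - c)].
  have hh := odd_double_half (a + b).+1; rewrite -addnn in hh.
  by exists (a + b).+1./2; rewrite pal_short; case: odd => /= in hh *;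
    try split; lia.
elim: c hac hc hpc => [|c IH] hac hc hpc; first lia.
have [e|ne] := eqVneq a c.+1; first by move: hp hpc; rewrite e addKn => /negP.
case: (boolP (pal S c (a + b - c))) => hq; first by apply: IH => //; lia.
exists c.+1; split; try lia.
rewrite /fingerprint hpc /= (_ : (a + b - c.+1).+1 = a + b - c) ?hq ?orbT;
  rewrite ?andbT /inside; lia.
Qed.

Lemma fingerprint_same_pals (Y : eqType) (T : nat -> Y) :
  (forall a b, F a b -> pal T a b) ->
  (forall a b, F a b -> 1 < a -> b < n -> T a.-1 != T b.+1) ->
  forall a b, inside n a b -> pal T a b = pal S a b.
Proof.
move=> palT sepT a b hin.
case: (boolP (pal S a b)) => hS.
  have [a' h1 h2] := pal_in_fingerprint hin hS.
  by apply: pal_nested (palT _ _ h2) _ _; lia.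
have [a' [h1 h2 hF]] := fingerprint_in_nonpal hin hS.
case/and3P: hin => ha hab hb.
have sep : T a'.-1 != T (a + b - a').+1 by apply: sepT; lia.
apply/negbTE; apply: contra sep => hT; apply/eqP/pal_ends; last lia.
by apply: pal_nested hT _ _; lia.
Qed.

End Fingerprint.

Section Components.
Variables (n : nat) (F : rel nat).
Local Notation comp := (Defs.comp F).
Local Notation comps := (Defs.comps n F).
Local Notation sofc := (string_of_coloring F).

Lemma geq_rel_sym : symmetric (@geq_rel n F).
Proof. by move=> u v; rewrite /geq_rel orbC. Qed.

Lemma mem_comp (u : 'I_n) : u \in comp u.
Proof. by rewrite inE connect0. Qed.

Lemma comp_eq (u v : 'I_n) : v \in comp u -> comp v = comp u.
Proof.
rewrite inE => huv; apply/setP => w; rewrite !inE.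
apply/idP/idP => h; first exact: connect_trans huv h.
by apply: connect_trans h; rewrite (sym_connect_sym geq_rel_sym).
Qed.

Lemma comp_in_comps (u : 'I_n) : comp u \in comps.
Proof. exact: imset_f. Qed.

Lemma compsP (C : {set 'I_n}) : reflect (exists u, C = comp u) (C \in comps).
Proof.
by apply: (iffP imsetP) => [[u _ ->] | [u ->]]; exists u.
Qed.

Lemma eq_edge_mirror a i j : a <= i < j -> F a (i + j - a) -> eq_edge F i j.
Proof.
move=> /andP [hai hij] hF; rewrite /eq_edge hij; apply/hasP; exists a => //.
by rewrite mem_iota; lia.
Qed.

Lemma string_of_coloringE (Y : Type) (psi : {set 'I_n} -> Y) (u : 'I_n) :
  sofc psi u.+1 = psi (comp u).
Proof.
rewrite /string_of_coloring /=; case: insubP => [u' _ e|]; last by rewrite ltn_ord.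
by congr (psi (comp _)); apply: val_inj.
Qed.

Lemma coloring_of_stringE (Y : Type) (T : nat -> Y) (C : {set 'I_n}) (u : 'I_n) :
  u \in C -> {in C, forall v : 'I_n, T v.+1 = T u.+1} ->
  coloring_of_string T C = T u.+1.
Proof.
move=> hu H; rewrite /coloring_of_string.
by case: pickP => [w hw|/(_ u)]; [exact: H | rewrite hu].
Qed.

Lemma string_of_coloring_eq_edge (Y : Type) (psi : {set 'I_n} -> Y) i j :
  0 < i -> j <= n -> eq_edge F i j -> sofc psi i = sofc psi j.
Proof.
move=> hi hj he; have hij : i < j by case/andP: he.
have ui : i.-1 < n by lia.
have uj : j.-1 < n by lia.
rewrite -(prednK hi) -(prednK (leq_ltn_trans (leq0n _) hij)).
rewrite -[i.-1]/(val (Ordinal ui)) -[j.-1]/(val (Ordinal uj)).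
rewrite !string_of_coloringE; congr psi; symmetry; apply: comp_eq.
by rewrite inE connect1 // /geq_rel /= !prednK ?he //; lia.
Qed.

Lemma coloring_of_string_of_coloring (Y : Type) (psi : {set 'I_n} -> Y) C :
  C \in comps -> coloring_of_string (sofc psi) C = psi C.
Proof.
case/compsP => u ->; rewrite (coloring_of_stringE (mem_comp u)).
  by rewrite string_of_coloringE.
by move=> v hv; rewrite !string_of_coloringE (comp_eq hv).
Qed.

Lemma nsym_string_of_coloring (Y : eqType) (psi : {set 'I_n} -> Y) :
  nsym n (sofc psi) = ncolors F psi.
Proof.
apply/perm_size/uniq_perm; rewrite ?undup_uniq // => x; rewrite !mem_undup.
apply/mapP/mapP => [[i hi ->] | [C hC ->]].
  have ui : i.-1 < n by move: hi; rewrite mem_iota; lia.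
  have -> : i = (Ordinal ui).+1 by move: hi; rewrite mem_iota /=; lia.
  rewrite string_of_coloringE; exists (comp (Ordinal ui)) => //.
  by rewrite mem_enum comp_in_comps.
move: hC; rewrite mem_enum => /compsP [u ->].
by exists u.+1; rewrite ?string_of_coloringE // mem_iota; move: (ltn_ord u); lia.
Qed.

Lemma ncolors_le (psi : {set 'I_n} -> nat) k :
  {in comps, forall C, psi C < k} -> ncolors F psi <= k.
Proof.
move=> bd; rewrite /ncolors -(size_iota 0 k).
apply: uniq_leq_size (undup_uniq _) _ => x; rewrite mem_undup => /mapP [C hC ->].
by rewrite mem_iota /= add0n bd // -mem_enum.
Qed.

Lemma proper_coloring_index (Y : eqType) (psi : {set 'I_n} -> Y) (l : seq Y) :
  proper_coloring F psi -> {in comps, forall C, psi C \in l} ->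
  proper_coloring F (fun C => index (psi C) l) /\
  {in comps, forall C, index (psi C) l < size l}.
Proof.
move=> pr hl; split=> [C C' hC hC' adj e | C hC]; last by rewrite index_mem hl.
exact: pr C C' hC hC' adj (index_inj (psi C) (hl _ hC) (hl _ hC') e).
Qed.

End Components.

Section ColoringsAndStrings.
Variables (X : eqType) (n : nat) (S : nat -> X).
Local Notation F := (fingerprint n S).
Local Notation A := (manacher n S).
Local Notation sofc := (string_of_coloring F).

Lemma fingerprint_inside a b : F a b -> inside n a b.
Proof. by case/and3P. Qed.

Lemma string_of_coloring_pal (Y : eqType) (psi : {set 'I_n} -> Y) a b :
  F a b -> pal (sofc psi) a b.
Proof.
move=> hF; case/and3P: (fingerprint_inside hF) => ha hab hb.
apply/palP => t ht; have [lt|gt|eq] := ltngtP t (a + b - t); last by rewrite -eq.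
  apply: string_of_coloring_eq_edge; try lia.
  apply: (eq_edge_mirror (a := a)); first lia.
  by rewrite (_ : t + (a + b - t) - a = b) //; lia.
symmetry; apply: string_of_coloring_eq_edge; try lia.
apply: (eq_edge_mirror (a := a)); first lia.
by rewrite (_ : a + b - t + t - a = b) //; lia.
Qed.

Lemma string_of_coloring_sep (Y : eqType) (psi : {set 'I_n} -> Y) a b :
  proper_coloring F psi -> F a b -> 1 < a -> b < n ->
  sofc psi a.-1 != sofc psi b.+1.
Proof.
move=> pr hF ha hb; case/and3P: (fingerprint_inside hF) => _ hab _.
have hu : a.-2 < n by lia.
have -> : a.-1 = (Ordinal hu).+1 by rewrite /=; lia.
rewrite -[b.+1]/((Ordinal hb : 'I_n).+1) !string_of_coloringE; apply/eqP.
apply: pr; rewrite ?comp_in_comps //.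
apply/existsP; exists (Ordinal hu); rewrite mem_comp /=.
apply/existsP; exists (Ordinal hb); rewrite mem_comp /= prednK; last lia.
by rewrite prednK ?hF ?andbT; lia.
Qed.

Lemma string_of_coloring_manacher (Y : eqType) (psi : {set 'I_n} -> Y) :
  proper_coloring F psi -> has_manacher n (sofc psi) A.
Proof.
move=> pr; apply/has_manacherP/fingerprint_same_pals => a b hF.
  exact: string_of_coloring_pal.
exact: string_of_coloring_sep.
Qed.

Section ManacherString.
Variables (Y : eqType) (T : nat -> Y).
Hypothesis HT : has_manacher n T A.

Lemma eq_edge_string i j : j <= n -> eq_edge F i j -> T i = T j.
Proof.
move=> hj /andP [hij /hasP [a ha hF]]; move: ha; rewrite mem_iota => ha.
have /palP palT : pal T a (i + j - a).
  rewrite ((has_manacherP n S T).1 HT _ _ (fingerprint_inside hF)).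
  by case/and3P: hF.
by rewrite palT; [congr T|]; lia.
Qed.

Lemma connect_string (u v : 'I_n) :
  connect (@geq_rel n F) u v -> T u.+1 = T v.+1.
Proof.
case/connectP => p; elim: p u => [|w p IH] u /=; first by move=> _ ->.
case/andP => /orP e pth vE; rewrite -(IH w pth vE).
by case: e => /eq_edge_string -> //; exact: ltn_ord.
Qed.

Lemma string_const_comps (C : {set 'I_n}) : C \in comps n F ->
  forall u v : 'I_n, u \in C -> v \in C -> T u.+1 = T v.+1.
Proof.
case/compsP => w -> u v; rewrite !inE => /connect_string hu /connect_string hv.
by rewrite -hu -hv.
Qed.

Lemma coloring_of_string_comp (C : {set 'I_n}) (u : 'I_n) :
  C \in comps n F -> u \in C -> coloring_of_string T C = T u.+1.
Proof.
move=> hC hu; apply: (coloring_of_stringE hu) => v hv.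
exact: string_const_comps hC _ _ hv hu.
Qed.

(* The maximal palindrome S[u+2..v] is also one of T, so T[u+1] = T[v+1] would
   extend it to a palindrome T[u+1..v+1] although S[u+1..v+1] is none. *)
Lemma coloring_of_string_proper : proper_coloring F (coloring_of_string (n:=n) T).
Proof.
move=> C C' hC hC' /existsP [u /andP [hu /existsP [v /andP [hv /andP [huv hF]]]]].
rewrite (coloring_of_string_comp hC hu) (coloring_of_string_comp hC' hv) => e.
have samepal := (has_manacherP n S T).1 HT.
have hin : inside n u.+1 v.+1 by rewrite /inside; move: (ltn_ord v); lia.
have hpT : pal T u.+2 v by rewrite samepal ?fingerprint_inside //; case/and3P: hF.
have hnS : ~~ pal S u.+1 v.+1.
  by case/and3P: hF => _ _ /=; rewrite (ltn_eqF (ltn_ord v)).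
have : pal T u.+1 v.+1.
  by apply: pal_extend hpT e; case/and3P: (fingerprint_inside hF) => *; lia.
by rewrite samepal // (negbTE hnS).
Qed.

Lemma string_of_coloring_of_string i :
  0 < i <= n -> sofc (coloring_of_string (n:=n) T) i = T i.
Proof.
move=> hi; have ui : i.-1 < n by lia.
have -> : i = (Ordinal ui).+1 by rewrite /=; lia.
rewrite string_of_coloringE.
exact: coloring_of_string_comp (comp_in_comps F _) (mem_comp F _).
Qed.

Lemma bounded_coloring_of_string :
  exists psi : {set 'I_n} -> nat,
    proper_coloring F psi /\ {in comps n F, forall C, psi C < nsym n T}.
Proof.
set syms := undup [seq T i | i <- iota 1 n].
have mem_syms C : C \in comps n F -> coloring_of_string (n:=n) T C \in syms.
  case/compsP=> u ->.
  rewrite (coloring_of_string_comp (comp_in_comps F u) (mem_comp F u)).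
  by rewrite mem_undup map_f // mem_iota; move: (ltn_ord u); lia.
have [pr bd] := proper_coloring_index coloring_of_string_proper mem_syms.
by exists (fun C => index (coloring_of_string (n:=n) T C) syms).
Qed.

End ManacherString.

Lemma string_of_bounded_coloring (psi : {set 'I_n} -> nat) k :
  proper_coloring F psi -> {in comps n F, forall C, psi C < k} ->
  has_manacher n (sofc psi) A /\ nsym n (sofc psi) <= k.
Proof.
move=> pr bd; split; first exact: string_of_coloring_manacher.
by rewrite nsym_string_of_coloring; apply: ncolors_le.
Qed.

Lemma min_symbols_iff_chromatic k :
  is_min_symbols n A k <-> is_chromatic_number n F k.
Proof.
split=> [[[T0 [HT0 <-]] LB] | [[psi [pr bd]] MIN]].
  split; first by have [psi pr_bd] := bounded_coloring_of_string HT0; exists psi.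
  move=> k' psi pr bd; have [HT le] := string_of_bounded_coloring pr bd.
  exact: leq_trans (LB _ _ HT) le.
have minT (Y : eqType) (T : nat -> Y) : has_manacher n T A -> k <= nsym n T.
  move=> HT; have [psi' [pr' bd']] := bounded_coloring_of_string HT.
  exact: MIN pr' bd'.
split=> //; have [HT le] := string_of_bounded_coloring pr bd.
by exists (sofc psi); split=> //; apply/eqP; rewrite eqn_leq le minT.
Qed.

End ColoringsAndStrings.

Theorem theorem4p1 (Sigma0 : eqType) (n : nat) (S : nat -> Sigma0) :
  let A := manacher n S in
  let F := fingerprint n S in
  (* (i) *)
  (forall (Sigma : eqType) (psi : {set 'I_n} -> Sigma) (k : nat),
      proper_coloring F psi -> ncolors F psi = k ->
      has_manacher n (string_of_coloring F psi) A /\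
      nsym n (string_of_coloring F psi) = k) /\
  (* (ii) *)
  (forall (Sigma : eqType) (T : nat -> Sigma),
      has_manacher n T A ->
      (forall C, C \in comps n F -> forall u v : 'I_n,
          u \in C -> v \in C -> T u.+1 = T v.+1) /\
      proper_coloring F (coloring_of_string (n:=n) T) /\
      (forall i, 1 <= i <= n -> string_of_coloring F (coloring_of_string (n:=n) T) i = T i)) /\
  (forall (Sigma : eqType) (psi : {set 'I_n} -> Sigma),
      proper_coloring F psi ->
      forall C, C \in comps n F -> coloring_of_string (string_of_coloring F psi) C = psi C) /\
  (* in particular *)
  (forall k, is_min_symbols n A k <-> is_chromatic_number n F k).
Proof.
move=> A F; split; [|split; [|split]].
- move=> Sigma psi k pr <-.
  by rewrite nsym_string_of_coloring; split=> //; exact: string_of_coloring_manacher.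
- move=> Sigma T HT; split; first exact: string_const_comps.
  by split; [exact: coloring_of_string_proper | exact: string_of_coloring_of_string].
- by move=> Sigma psi _ C; exact: coloring_of_string_of_coloring.
- exact: min_symbols_iff_chromatic.
Qed.
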